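(* Let $n$ be a positive integer, let $u:2^{[n]}\to\mathbb{R}_{\ge 0}$ be a normalized ($u(\emptyset)=0$), monotone, submodular and second-order supermodular set function, and let $c:2^{[n]}\to\mathbb{R}_{\ge 0}$ be the modular set function $c(S)=\sum_{i\in S}c_i$ with $c_1,\dots,c_n>0$. Let $(l_1,\dots,l_n)$ be a locally optimal permutation of $[n]$ (in the sense defined in the context) and let $(o_1,\dots,o_n)$ be an optimal permutation for Min-Sum Submodular Cover on $(u,c)$. Write $L_j=\{l_1,\dots,l_j\}$ and $O_i=\{o_1,\dots,o_i\}$ (with $L_0=O_0=\emptyset$), and $c(o_i)=c(\{o_i\})$. For $i,j\in[n]$ define $$b_{ij}=u(o_i\mid O_{i-1}\cup L_{j-1})-u(o_i\mid O_{i-1}\cup L_{j-1}\cup\{l_j\}),$$ which also equals $u(l_j\mid O_{i-1}\cup L_{j-1})-u(l_j\mid O_{i-1}\cup L_{j-1}\cup\{o_i\})$. Then for all $i,j\in[n]$, $$\sum_{r=j}^n c(L_r)\sum_{s=1}^n b_{sr}\;\le\;[c(o_i)+c(L_{j-1})]\sum_{r=j}^n b_{ir}+\sum_{r=j}^n [c(o_i)+c(L_r)]\sum_{\substack{s=1\\ s\ne i}}^n b_{sr}.$$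
   Context: Notation: $f(e\mid S):=f(S\cup\{e\})-f(S)$. A set function $f$ on $2^{[n]}$ is monotone if $f(S\cup\{i\})\ge f(S)$, submodular if $f(i\mid S)\ge f(i\mid S\cup\{j\})$, and second-order supermodular if $f(i\mid S)-f(i\mid S\cup\{j\})\ge f(i\mid S\cup\{k\})-f(i\mid S\cup\{k,j\})$, for all $S\subseteq[n]$ and $i,j,k\in[n]\setminus S$. Min-Sum Submodular Cover on $(u,c)$: minimize over permutations of $[n]$ the objective $\sum_{i=1}^n c(S_i)(u(S_i)-u(S_{i-1}))$, $S_i$ the set of the first $i$ elements, $S_0=\emptyset$. Pseudo-neighbors and local optimality: a pseudo-neighbor of a permutation $\pi$ is a sequence of length $n+1$ obtained by taking the element at some position $i$ of $\pi$ and inserting a second copy of it at some position $j<i$. Its objective value is $\sum_{k=1}^{n+1} c'(S_k)[u(S_k)-u(S_{k-1})]$, where $S_k$ is its prefix of length $k$, $u(S_k)$ is $u$ evaluated on the set of distinct elements of $S_k$, and $c'(S_k)=\sum_{t=1}^k c(\{s_t\})$ with $s_t$ the element in position $t$ (so both copies are charged when both lie in the prefix). A permutation is locally optimal if no pseudo-neighbor has strictly lower objective value than it. *)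

(* Ground set [n] = 'I_n; positions are 0-based. *)
From mathcomp Require Import all_boot all_order all_algebra all_fingroup.
Set Implicit Arguments. Unset Strict Implicit. Unset Printing Implicit Defensive.
Import Order.TTheory GRing.Theory Num.Theory.
Local Open Scope ring_scope.

Section Defs.
Variables (R : realFieldType) (n : nat).
Implicit Types (u : {set 'I_n} -> R) (S : {set 'I_n}).

Definition marg u (e : 'I_n) S : R := u (e |: S) - u S.

Definition normalized u := u set0 = 0.
Definition nonneg_sf u := forall S, 0 <= u S.
Definition monotone_sf u := forall S (i : 'I_n), i \notin S -> u S <= u (i |: S).
Definition submodular_sf u := forall S (i j : 'I_n), i \notin S -> j \notin S ->
  marg u i (j |: S) <= marg u i S.
Definition second_order_supermodular u := forall S (i j k : 'I_n),
  i \notin S -> j \notin S -> k \notin S ->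
  marg u i (k |: S) - marg u i (j |: (k |: S)) <= marg u i S - marg u i (j |: S).

Definition modc (cc : 'I_n -> R) S : R := \sum_(i in S) cc i.

Definition pprefix (p : {perm 'I_n}) (k : nat) : {set 'I_n} :=
  [set p i | i : 'I_n & (i < k)%N].

Definition perm_obj u (cc : 'I_n -> R) (p : {perm 'I_n}) : R :=
  \sum_(k < n) modc cc (pprefix p k.+1) * (u (pprefix p k.+1) - u (pprefix p k)).

Definition is_optimal u cc (p : {perm 'I_n}) :=
  forall q : {perm 'I_n}, perm_obj u cc p <= perm_obj u cc q.

Definition perm_seq (p : {perm 'I_n}) : seq 'I_n := [seq p i | i <- enum 'I_n].

Definition pseudo_neighbor (p : {perm 'I_n}) (i : 'I_n) (j : nat) : seq 'I_n :=
  take j (perm_seq p) ++ p i :: drop j (perm_seq p).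

(* objective of a sequence (with repetitions): c' charges every copy in the pprefix *)
Definition seq_obj u (cc : 'I_n -> R) (s : seq 'I_n) : R :=
  \sum_(k < size s) (\sum_(x <- take k.+1 s) cc x) *
     (u [set x in take k.+1 s] - u [set x in take k s]).

Definition locally_optimal u cc (p : {perm 'I_n}) :=
  forall (i : 'I_n) (j : nat), (j < i)%N ->
    ~ (seq_obj u cc (pseudo_neighbor p i j) < perm_obj u cc p).

(* b_{ij} with 0-based indices: O_{i-1} = pprefix o i, L_{j-1} = pprefix l j *)
Definition bcoef u (o l : {perm 'I_n}) (i j : 'I_n) : R :=
  marg u (o i) (pprefix o i :|: pprefix l j)
  - marg u (o i) (l j |: (pprefix o i :|: pprefix l j)).

End Defs.

From mathcomp Require Import all_boot all_order all_algebra all_fingroup.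
From mathcomp Require Import ring.
Import Order.TTheory GRing.Theory Num.Theory.
Local Open Scope ring_scope.

(* Write h_k = u(o_i | O_{i-1} u L_{k-1}).  Summing b_{sr} over s telescopes to
   u(L_r) - u(L_{r-1}), and summing b_{ir} over r >= k telescopes to h_k, so by
   summation by parts the right-hand side minus the left-hand side equals
   c(o_i) (u([n]) - u(L_{j-1})) - sum_{k >= j} c(l_k) h_k.  Submodularity gives
   h_k <= u(o_i | L_{k-1}), and
   sum_{k >= j} c(l_k) u(o_i | L_{k-1}) <= c(o_i) (u([n]) - u(L_{j-1}))
   says precisely that the pseudo-neighbor of l inserting a copy of o_i at
   position j is no better than l. *)

Lemma sum_ord_geq {V : nmodType} {n} (j : 'I_n) (F : nat -> V) :
  \sum_(r : 'I_n | (j <= r)%N) F r = \sum_(j <= r < n) F r.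
Proof. by rewrite big_geq_mkord; apply: eq_bigl. Qed.

Lemma telescope_sum_ord_geq {V : zmodType} {n} (j : 'I_n) (F : nat -> V) :
  \sum_(r : 'I_n | (j <= r)%N) (F r.+1 - F r) = F n - F j.
Proof. by rewrite (sum_ord_geq j (fun r => F r.+1 - F r)) telescope_sumr // ltnW. Qed.

Lemma sumr_by_parts {R : comPzRingType} (C V : nat -> R) N : C 0%N = 0 ->
  \sum_(0 <= k < N) C k.+1 * (V k.+1 - V k) =
  \sum_(0 <= k < N) (C k.+1 - C k) * (V N - V k).
Proof.
move=> C0; elim: N => [|N IH]; first by rewrite !big_geq.
rewrite !big_nat_recr //= IH.
have -> : \sum_(0 <= k < N) (C k.+1 - C k) * (V N.+1 - V k) =
  \sum_(0 <= k < N) (C k.+1 - C k) * (V N - V k) +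
  (\sum_(0 <= k < N) (C k.+1 - C k)) * (V N.+1 - V N).
  by rewrite mulr_suml -big_split /=; apply: eq_bigr => k _; ring.
by rewrite telescope_sumr // C0 subr0; ring.
Qed.

Lemma regroup_weighted_sums {R : comPzRingType} (I : finType) (P : pred I)
  (a c0 : R) (b c d : I -> R) :
  (a + c0) * \sum_(i | P i) b i + \sum_(i | P i) (a + c i) * (d i - b i) =
  \sum_(i | P i) c i * d i + (a * \sum_(i | P i) d i - \sum_(i | P i) (c i - c0) * b i).
Proof.
rewrite !mulr_sumr -sumrB -!big_split /=.
by apply: eq_bigr => i _; ring.
Qed.

Lemma le_subset_of_le_setU1 {d} {T : finType} {P : porderType d} (f : {set T} -> P) :
  (forall S x, f (x |: S) <= f S)%O ->
  forall A B : {set T}, A \subset B -> (f B <= f A)%O.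
Proof.
move=> f_setU1 A B; move Hk: #|B| => k; elim: k B Hk => [|k IH] B Hk sAB.
  have B0 : B = set0 by apply/eqP; rewrite -cards_eq0 Hk.
  by have -> : A = B by apply/eqP; rewrite eqEsubset sAB B0 sub0set.
have [sBA | /subsetPn[x xB xA]] := boolP (B \subset A).
  by have -> : B = A by apply/eqP; rewrite eqEsubset sBA sAB.
rewrite -(setD1K xB); apply: le_trans (f_setU1 _ _) _; apply: IH.
  by move: Hk; rewrite (cardsD1 x) xB => -[].
by rewrite subsetD1 sAB xA.
Qed.

Lemma set_cat_cons {T : finType} (a b : seq T) y :
  [set x in a ++ y :: b] = y |: [set x in a ++ b].
Proof. by apply/setP => x; rewrite !inE !mem_cat in_cons orbCA. Qed.

Section SetFunction.
Context {R : realFieldType} {n : nat}.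
Implicit Types (A B S : {set 'I_n}) (u : {set 'I_n} -> R).

Lemma monotone_sf_subset u : monotone_sf u -> forall A B, A \subset B -> u A <= u B.
Proof.
move=> u_mono A B sAB; rewrite -lerN2.
apply: (le_subset_of_le_setU1 (fun S => - u S)) sAB => S x; rewrite lerN2.
have [xS | xS] := boolP (x \in S); last exact: u_mono.
by rewrite (setUidPr _) ?sub1set.
Qed.

Lemma marg_mem u e S : e \in S -> marg u e S = 0.
Proof. by move=> eS; rewrite /marg (setUidPr _) ?sub1set ?subrr. Qed.

Lemma submodular_sf_subset u : submodular_sf u ->
  forall e A B, A \subset B -> marg u e B <= marg u e A.
Proof.
move=> u_sub e A B; apply: (le_subset_of_le_setU1 (marg u e)) => S x.
have [eS | eS] := boolP (e \in S); first by rewrite !marg_mem // in_setU1 eS orbT.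
have [xS | xS] := boolP (x \in S); first by rewrite (setUidPr _) ?sub1set.
exact: u_sub.
Qed.

End SetFunction.

Section Prefix.
Context {n : nat}.
Variable p : {perm 'I_n}.

Lemma mem_pprefix k x : (x \in pprefix p k) = ((p^-1)%g x < k)%N.
Proof.
apply/imsetP/idP => [[y yk ->]| xk]; first by rewrite permK; move: yk; rewrite inE.
by exists ((p^-1)%g x); rewrite ?inE ?permKV.
Qed.

Lemma pprefix0 : pprefix p 0 = set0.
Proof. by apply/setP => x; rewrite mem_pprefix inE. Qed.

Lemma pprefixT : pprefix p n = setT.
Proof. by apply/setP => x; rewrite mem_pprefix inE ltn_ord. Qed.

Lemma pprefixS (r : 'I_n) : pprefix p r.+1 = p r |: pprefix p r.
Proof.
apply/setP => x; rewrite in_setU1 !mem_pprefix ltnS leq_eqVlt.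
by rewrite -(inj_eq (@perm_inj _ (p^-1)%g) x) permK.
Qed.

Lemma modc_pprefix {R : realFieldType} (cc : 'I_n -> R) k :
  modc cc (pprefix p k) = \sum_(r : 'I_n | (r < k)%N) cc (p r).
Proof.
rewrite /modc big_imset; first by apply: eq_bigl => r; rewrite inE.
by move=> ? ? _ _; apply: perm_inj.
Qed.

Lemma size_perm_seq : size (perm_seq p) = n.
Proof. by rewrite size_map size_enum_ord. Qed.

Lemma nth_perm_seq x0 (r : 'I_n) : nth x0 (perm_seq p) r = p r.
Proof. by rewrite (nth_map x0) ?size_enum_ord // nth_ord_enum. Qed.

Lemma uniq_perm_seq : uniq (perm_seq p).
Proof. by rewrite (map_inj_uniq (@perm_inj _ p)) enum_uniq. Qed.

Lemma mem_perm_seq x : x \in perm_seq p.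
Proof. by rewrite -[x](permKV p) map_f ?mem_enum. Qed.

Lemma pprefix_take k : pprefix p k = [set x in take k (perm_seq p)].
Proof.
apply/setP => x; rewrite inE mem_pprefix /perm_seq -map_take.
rewrite -[x in x \in _](permKV p) (mem_map (@perm_inj _ p)).
by rewrite in_take ?mem_enum ?index_enum_ord.
Qed.

Lemma modc_pprefix_take {R : realFieldType} (cc : 'I_n -> R) k :
  modc cc (pprefix p k) = \sum_(x <- take k (perm_seq p)) cc x.
Proof.
rewrite pprefix_take /modc big_uniq ?take_uniq ?uniq_perm_seq //.
by apply: eq_bigl => x; rewrite inE.
Qed.

End Prefix.

Section Objective.
Context {R : realFieldType} {n : nat}.
Variables (u : {set 'I_n} -> R) (cc : 'I_n -> R).

Lemma seq_obj_by_parts (s : seq 'I_n) x0 :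
  seq_obj u cc s = \sum_(0 <= k < size s) cc (nth x0 s k) *
     (u [set x in s] - u [set x in take k s]).
Proof.
rewrite /seq_obj -(big_mkord xpredT (fun k => (\sum_(x <- take k.+1 s) cc x) *
  (u [set x in take k.+1 s] - u [set x in take k s]))).
rewrite (sumr_by_parts (fun k => \sum_(x <- take k s) cc x)) ?take0 ?big_nil //.
apply: eq_big_nat => k /andP[_ ks].
by rewrite take_size (take_nth x0 ks) big_rcons /= addrAC subrr add0r.
Qed.

Lemma seq_obj_insert (s : seq 'I_n) y j x0 : y \in s -> (j <= size s)%N ->
  seq_obj u cc (take j s ++ y :: drop j s) =
  seq_obj u cc s + cc y * (u [set x in s] - u [set x in take j s])
  - \sum_(j <= k < size s) cc (nth x0 s k) * marg u y [set x in take k s].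
Proof.
move=> ys js; set s' := take j s ++ _.
have size_s' : size s' = (size s).+1.
  by rewrite size_cat /= size_drop size_takel // addnS subnKC.
have set_s' : [set x in s'] = [set x in s].
  by rewrite set_cat_cons cat_take_drop (setUidPr _) // sub1set inE.
have head_s' k : (k < j)%N -> nth x0 s' k = nth x0 s k /\ take k s' = take k s.
  move=> kj; rewrite nth_cat take_cat size_takel // kj (nth_take _ kj).
  by rewrite take_takel // ltnW.
have mid_s' : nth x0 s' j = y /\ take j s' = take j s.
  by rewrite nth_cat take_cat size_takel // ltnn subnn take0 cats0.
have tail_s' k : (j <= k)%N -> nth x0 s' k.+1 = nth x0 s k /\
    [set x in take k.+1 s'] = y |: [set x in take k s].
  move=> jk; rewrite nth_cat take_cat size_takel // ltnNge (leqW jk) /= (subSn jk).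
  by rewrite /= nth_drop (subnKC jk) set_cat_cons -takeD (subnKC jk).
rewrite !(seq_obj_by_parts _ x0) size_s' set_s'.
rewrite (big_cat_nat (leq0n j) (leqW js)) (big_cat_nat (leq0n j) js) /=.
rewrite (@big_ltn _ _ _ j) ?ltnS // big_add1 /= -!addrA; congr (_ + _).
  by apply: eq_big_nat => k /andP[_ /head_s'[-> ->]].
rewrite addrCA; case: mid_s' => -> ->; congr (_ + _); rewrite -sumrB.
by apply: eq_big_nat => k /andP[/tail_s'[-> ->] _]; rewrite /marg; ring.
Qed.

Lemma perm_obj_seq (p : {perm 'I_n}) : perm_obj u cc p = seq_obj u cc (perm_seq p).
Proof.
rewrite /perm_obj /seq_obj size_perm_seq; apply: eq_bigr => k _.
by rewrite modc_pprefix_take !pprefix_take.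
Qed.

Lemma locally_optimal_marg_bound (l : {perm 'I_n}) :
  monotone_sf u -> (forall i, 0 <= cc i) -> locally_optimal u cc l ->
  forall e j : 'I_n,
    \sum_(k : 'I_n | (j <= k)%N) cc (l k) * marg u e (pprefix l k)
    <= cc e * (u setT - u (pprefix l j)).
Proof.
(* If e = l_m comes after position j, compare l with its pseudo-neighbor copying
   e to position j; otherwise e lies in every L_k with k > j. *)
move=> u_mono cc_ge0 l_opt e j; pose m := (l^-1)%g e.
have lm : l m = e by rewrite permKV.
have marg_le : marg u e (pprefix l j) <= u setT - u (pprefix l j).
  by rewrite lerD2r monotone_sf_subset ?subsetT.
have [jm | mj] := ltnP j m.
  have := l_opt m j jm; rewrite /pseudo_neighbor perm_obj_seq lm.
  rewrite (seq_obj_insert _ _ _ e) ?mem_perm_seq ?size_perm_seq 1?ltnW //.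
  have -> : [set x in perm_seq l] = setT by apply/setP => x; rewrite !inE mem_perm_seq.
  rewrite -pprefix_take -sum_ord_geq.
  under eq_bigr do rewrite nth_perm_seq -pprefix_take.
  by move/negP; rewrite -leNgt -addrA lerDl subr_ge0.
rewrite (bigD1 j) //= big1 ?addr0 => [|k /andP[jk kj]]; last first.
  by rewrite marg_mem ?mulr0 // mem_pprefix (leq_ltn_trans mj) // ltn_neqAle eq_sym kj.
have [mj' | mj'] := eqVneq m j.
  by move: marg_le; rewrite -mj' lm => /(ler_wpM2l (cc_ge0 e)).
rewrite marg_mem ?mulr0; last by rewrite mem_pprefix ltn_neqAle mj' mj.
by rewrite mulr_ge0 // subr_ge0 monotone_sf_subset ?subsetT.
Qed.

End Objective.

Section Bcoef.
Context {R : realFieldType} {n : nat}.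
Variables (u : {set 'I_n} -> R) (cc : 'I_n -> R).
Variables o l : {perm 'I_n}.

Lemma bcoef_marg (i r : 'I_n) : bcoef u o l i r =
  marg u (o i) (pprefix o i :|: pprefix l r)
  - marg u (o i) (pprefix o i :|: pprefix l r.+1).
Proof. by rewrite /bcoef pprefixS setUCA. Qed.

Lemma sum_bcoef (r : 'I_n) :
  \sum_s bcoef u o l s r = u (pprefix l r.+1) - u (pprefix l r).
Proof.
(* b_{sr} is a mixed second difference of (s, r) |-> u(O_s u L_r). *)
pose F k := u (pprefix o k :|: pprefix l r) - u (pprefix o k :|: pprefix l r.+1).
rewrite (eq_bigr (fun s : 'I_n => F s.+1 - F s)) => [|s _]; last first.
  have addl Y : l r |: (Y :|: pprefix l r) = Y :|: pprefix l r.+1.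
    by rewrite pprefixS setUCA.
  have addo X : o s |: (pprefix o s :|: X) = pprefix o s.+1 :|: X.
    by rewrite pprefixS setUA.
  by rewrite /bcoef /marg /F !addl !addo; ring.
rewrite -(big_mkord xpredT (fun s => F s.+1 - F s)) telescope_sumr //.
by rewrite /F pprefix0 pprefixT !set0U !setTU subrr sub0r opprB.
Qed.

Lemma sum_bcoef_geq (i j : 'I_n) : \sum_(r : 'I_n | (j <= r)%N) bcoef u o l i r =
  marg u (o i) (pprefix o i :|: pprefix l j).
Proof.
pose h k := marg u (o i) (pprefix o i :|: pprefix l k).
rewrite (eq_bigr (fun r : 'I_n => - (h r.+1 - h r))) => [|r _]; last first.
  by rewrite bcoef_marg [RHS]opprB.
by rewrite sumrN telescope_sum_ord_geq /h pprefixT setUT marg_mem ?in_setT // sub0r opprK.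
Qed.

Lemma sum_weighted_bcoef_geq (i j : 'I_n) :
  \sum_(r : 'I_n | (j <= r)%N)
     (modc cc (pprefix l r.+1) - modc cc (pprefix l j)) * bcoef u o l i r =
  \sum_(k : 'I_n | (j <= k)%N) cc (l k) * marg u (o i) (pprefix o i :|: pprefix l k).
Proof.
have cost (r : 'I_n) : (j <= r)%N ->
    modc cc (pprefix l r.+1) - modc cc (pprefix l j) =
    \sum_(k : 'I_n | (j <= k <= r)%N) cc (l k).
  move=> jr; rewrite !modc_pprefix (bigID (fun k : 'I_n => (k < j)%N)) /=.
  rewrite (eq_bigl (fun k : 'I_n => (k < j)%N)) => [|k]; last first.
    by apply/andP/idP => [[] //|kj]; split=> //; exact: leq_trans kj (leqW jr).
  by rewrite addrC addrK; apply: eq_bigl => k; rewrite -leqNgt ltnS andbC.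
rewrite (eq_bigr (fun r : 'I_n =>
    \sum_(k : 'I_n | (j <= k <= r)%N) cc (l k) * bcoef u o l i r)) => [|r jr]; last first.
  by rewrite cost // mulr_suml.
rewrite (exchange_big_dep (fun k : 'I_n => (j <= k)%N)) /= => [|r k _ /andP[] //].
apply: eq_bigr => k jk; rewrite -mulr_sumr -sum_bcoef_geq; congr (_ * _).
apply: eq_bigl => r; rewrite jk /=.
by apply/andP/idP => [[] //|kr]; split=> //; exact: leq_trans jk kr.
Qed.

End Bcoef.

Theorem lemma1 (R : realFieldType) (n : nat) (hn : (0 < n)%N)
  (u : {set 'I_n} -> R) (cc : 'I_n -> R)
  (hu0 : normalized u) (hunn : nonneg_sf u) (humon : monotone_sf u)
  (husub : submodular_sf u) (husos : second_order_supermodular u)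
  (hcc : forall i, 0 < cc i)
  (l o : {perm 'I_n})
  (hl : locally_optimal u cc l) (ho : is_optimal u cc o) :
  forall i j : 'I_n,
    \sum_(r : 'I_n | (j <= r)%N)
        modc cc (pprefix l (r.+1)%N) * \sum_(s : 'I_n) bcoef u o l s r
    <= (modc cc [set o i] + modc cc (pprefix l j)) *
         \sum_(r : 'I_n | (j <= r)%N) bcoef u o l i r
       + \sum_(r : 'I_n | (j <= r)%N)
           (modc cc [set o i] + modc cc (pprefix l (r.+1)%N)) *
             \sum_(s : 'I_n | s != i) bcoef u o l s r.
Proof.
move=> i j.
have other_bcoef (r : 'I_n) : \sum_(s | s != i) bcoef u o l s r =
    (u (pprefix l r.+1) - u (pprefix l r)) - bcoef u o l i r.
  by rewrite -(sum_bcoef u o l) [in RHS](bigD1 i) //= addrAC subrr add0r.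
have cost_oi : modc cc [set o i] = cc (o i) by rewrite /modc big_set1.
rewrite cost_oi.
under eq_bigr do rewrite sum_bcoef.
under [X in _ <= _ + X]eq_bigr do rewrite other_bcoef.
rewrite regroup_weighted_sums lerDl subr_ge0 sum_weighted_bcoef_geq.
rewrite (telescope_sum_ord_geq j (fun k => u (pprefix l k))) pprefixT.
have cc_ge0 k : 0 <= cc k by exact: ltW.
apply: le_trans (locally_optimal_marg_bound u cc l humon cc_ge0 hl (o i) j).
apply: ler_sum => k _; apply: ler_wpM2l => //.
exact: submodular_sf_subset (subsetUr _ _).
Qed.
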